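(* Let $P:\mathcal{C}^{\mathrm{op}}\to\mathbf{Hey}$ be a Gödel hyperdoctrine such that the bottom element $\bot$ is a quantifier-free predicate. Then $P$ satisfies Markov's Rule: for all objects $A,B$ of $\mathcal{C}$ and every quantifier-free $\alpha_D\in P(A\times B)$, if \[ b:B\;|\;\top\vdash\neg\forall a.\alpha_D(a,b)\] then \[ b:B\;|\;\top\vdash\exists a.\neg\alpha_D(a,b).\]
   Context: A hyperdoctrine is a functor $P:\mathcal{C}^{\mathrm{op}}\to\mathbf{Hey}$ from a cartesian closed category $\mathcal{C}$ to Heyting algebras such that each $P_f$ has a left adjoint $\exists_f$ and a right adjoint $\forall_f$ satisfying Beck–Chevalley. A Gödel hyperdoctrine is a hyperdoctrine which (as a functor to $\mathbf{Pos}$) is a Gödel doctrine. $\neg\phi$ denotes $\phi\rightarrow\bot$. A doctrine $P:\mathcal{C}^{\mathrm{op}}\to\mathbf{Pos}$ ($\mathcal{C}$ with finite products) is existential/universal if reindexing along each product projection $\pi$ has a left adjoint $\exists_\pi$ / right adjoint $\forall_\pi$ satisfying Beck–Chevalley along pullbacks of projections. Notation: $b:B\;|\;\phi\vdash\psi$ means $\phi\le\psi$ in $P(B)$; $\exists a.\psi(a,b)$, $\forall a.\psi(a,b)$ denote the quantifiers along the projection $A\times B\to B$; substitution is reindexing. In an existential doctrine, $\alpha\in P(I)$ is existential-free if for every $f:A\to I$, every $B$ and every $\beta\in P(A\times B)$ with $P_f\alpha\le\exists_{\pi_A}\beta$ there is $g:A\to B$ with $P_f\alpha\le P_{\langle1_A,g\rangle}\beta$.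 In a universal doctrine $Q$, $\alpha\in Q(I)$ is universal-free if for every $f:A\to I$, every $B$ and every $\beta\in Q(A\times B)$ with $\forall_{\pi_A}\beta\le Q_f\alpha$ there is $g:A\to B$ with $Q_{\langle1_A,g\rangle}\beta\le Q_f\alpha$. Enough existential-free (universal-free) predicates: every $\alpha\in P(I)$ equals $\exists_{\pi_I}\beta$ (resp. $\forall_{\pi_I}\beta$) for some $A$ and existential-free (universal-free) $\beta\in P(I\times A)$. A Gödel doctrine: (1) $\mathcal{C}$ cartesian closed; (2) $P$ existential and universal; (3) $P$ has enough existential-free predicates; (4) existential-free predicates are stable under $\forall_\pi$ for projections $\pi$; (5) the sub-doctrine $P'$ of existential-free predicates (a universal doctrine) has enough universal-free predicates. A predicate is quantifier-free if it is existential-free in $P$ and universal-free in $P'$; ''$\bot$ is quantifier-free'' means $\bot\in P(I)$ is quantifier-free for every object $I$. *)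

Set Implicit Arguments.
Unset Strict Implicit.

Record CCCat := {
  ob :> Type;
  hom : ob -> ob -> Type;
  idm : forall A, hom A A;
  comp : forall A B C, hom B C -> hom A B -> hom A C;
  comp_idl : forall A B (f : hom A B), comp (idm B) f = f;
  comp_idr : forall A B (f : hom A B), comp f (idm A) = f;
  comp_assoc : forall A B C D (f : hom A B) (g : hom B C) (h : hom C D),
      comp h (comp g f) = comp (comp h g) f;
  term : ob;
  to_term : forall A, hom A term;
  to_term_uniq : forall A (f : hom A term), f = to_term A;
  prod : ob -> ob -> ob;
  p1 : forall A B, hom (prod A B) A;
  p2 : forall A B, hom (prod A B) B;
  pair : forall X A B, hom X A -> hom X B -> hom X (prod A B);
  p1_pair : forall X A B (f : hom X A) (g : hom X B), comp (p1 A B) (pair f g) = f;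
  p2_pair : forall X A B (f : hom X A) (g : hom X B), comp (p2 A B) (pair f g) = g;
  pair_uniq : forall X A B (h : hom X (prod A B)),
      h = pair (comp (p1 A B) h) (comp (p2 A B) h);
  expo : ob -> ob -> ob;
  ev : forall B C, hom (prod (expo B C) B) C;
  curry : forall A B C, hom (prod A B) C -> hom A (expo B C);
  ev_curry : forall A B C (f : hom (prod A B) C),
      comp (ev B C) (pair (comp (curry f) (p1 A B)) (p2 A B)) = f;
  curry_uniq : forall A B C (f : hom (prod A B) C) (g : hom A (expo B C)),
      comp (ev B C) (pair (comp g (p1 A B)) (p2 A B)) = f -> g = curry f
}.

Arguments hom {c} _ _.
Arguments idm {c} _.
Arguments comp {c A B C} _ _.
Arguments term {c}.
Arguments prod {c} _ _.
Arguments p1 {c} _ _.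
Arguments p2 {c} _ _.
Arguments pair {c X A B} _ _.
Arguments expo {c} _ _.

Record HeytingAlg := {
  hcar :> Type;
  hle : hcar -> hcar -> Prop;
  htop : hcar;
  hbot : hcar;
  hmeet : hcar -> hcar -> hcar;
  hjoin : hcar -> hcar -> hcar;
  himp : hcar -> hcar -> hcar;
  hle_refl : forall x, hle x x;
  hle_trans : forall x y z, hle x y -> hle y z -> hle x z;
  hle_antisym : forall x y, hle x y -> hle y x -> x = y;
  htop_ax : forall x, hle x htop;
  hbot_ax : forall x, hle hbot x;
  hmeet_ax : forall x y z, hle z (hmeet x y) <-> (hle z x /\ hle z y);
  hjoin_ax : forall x y z, hle (hjoin x y) z <-> (hle x z /\ hle y z);
  himp_ax : forall x y z, hle (hmeet z x) y <-> hle z (himp x y)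
}.

Arguments hle {h} _ _.
Arguments htop {h}.
Arguments hbot {h}.
Arguments hmeet {h} _ _.
Arguments hjoin {h} _ _.
Arguments himp {h} _ _.

Definition hneg {H : HeytingAlg} (x : H) : H := himp x hbot.

(* ---------- pullback squares ----------
        D --g'--> B
        |f'       |f
        v         v
        C --g-->  A                                                     *)
Definition is_pullback {C : CCCat} {A B Cc D : C}
  (f : hom B A) (g : hom Cc A) (f' : hom D Cc) (g' : hom D B) : Prop :=
  comp f g' = comp g f' /\
  forall X (h : hom X B) (k : hom X Cc), comp f h = comp g k ->
    exists u : hom X D, (comp g' u = h /\ comp f' u = k) /\
      forall u' : hom X D, comp g' u' = h -> comp f' u' = k -> u' = u.

Record Hyperdoctrine (C : CCCat) := {
  pred : C -> HeytingAlg;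
  reidx : forall A B : C, hom A B -> pred B -> pred A;
  reidx_id : forall A (x : pred A), reidx (idm A) x = x;
  reidx_comp : forall A B D (f : hom A B) (g : hom B D) (x : pred D),
      reidx (comp g f) x = reidx f (reidx g x);
  reidx_top : forall A B (f : hom A B), reidx f htop = htop;
  reidx_bot : forall A B (f : hom A B), reidx f hbot = hbot;
  reidx_meet : forall A B (f : hom A B) x y, reidx f (hmeet x y) = hmeet (reidx f x) (reidx f y);
  reidx_join : forall A B (f : hom A B) x y, reidx f (hjoin x y) = hjoin (reidx f x) (reidx f y);
  reidx_imp : forall A B (f : hom A B) x y, reidx f (himp x y) = himp (reidx f x) (reidx f y);
  exs : forall A B : C, hom A B -> pred A -> pred B;
  alls : forall A B : C, hom A B -> pred A -> pred B;
  exs_adj : forall A B (f : hom A B) (x : pred A) (y : pred B),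
      hle (exs f x) y <-> hle x (reidx f y);
  alls_adj : forall A B (f : hom A B) (x : pred A) (y : pred B),
      hle (reidx f y) x <-> hle y (alls f x);
  exs_BC : forall A B Cc D (f : hom B A) (g : hom Cc A) (f' : hom D Cc) (g' : hom D B),
      is_pullback f g f' g' ->
      forall x : pred B, reidx g (exs f x) = exs f' (reidx g' x);
  alls_BC : forall A B Cc D (f : hom B A) (g : hom Cc A) (f' : hom D Cc) (g' : hom D B),
      is_pullback f g f' g' ->
      forall x : pred B, reidx g (alls f x) = alls f' (reidx g' x)
}.

Arguments pred {C} h _.
Arguments reidx {C h A B} _ _.
Arguments exs {C h A B} _ _.
Arguments alls {C h A B} _ _.

Section Godel.
Context {C : CCCat} (P : Hyperdoctrine C).

Definition ex_free {I : C} (alpha : pred P I) : Prop :=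
  forall (A : C) (f : hom A I) (B : C) (beta : pred P (prod A B)),
    hle (reidx f alpha) (exs (p1 A B) beta) ->
    exists g : hom A B, hle (reidx f alpha) (reidx (pair (idm A) g) beta).

(* universal-free condition in the sub-doctrine P' of existential-free predicates
   (beta ranges over P'(A x B), i.e. existential-free predicates) *)
Definition univ_free' {I : C} (alpha : pred P I) : Prop :=
  forall (A : C) (f : hom A I) (B : C) (beta : pred P (prod A B)),
    ex_free beta ->
    hle (alls (p1 A B) beta) (reidx f alpha) ->
    exists g : hom A B, hle (reidx (pair (idm A) g) beta) (reidx f alpha).

Definition quantifier_free {I : C} (alpha : pred P I) : Prop :=
  ex_free alpha /\ univ_free' alpha.

(* Gödel doctrine conditions (1) and (2) hold automatically for a hyperdoctrine
   on a cartesian closed category; (3)-(5): *)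
Record GodelHyperdoctrine : Prop := {
  enough_ex_free : forall (I : C) (alpha : pred P I),
      exists (A : C) (beta : pred P (prod I A)),
        ex_free beta /\ alpha = exs (p1 I A) beta;
  ex_free_alls_stable : forall (I A : C) (beta : pred P (prod I A)),
      ex_free beta -> ex_free (alls (p1 I A) beta);
  enough_univ_free' : forall (I : C) (alpha : pred P I),
      ex_free alpha ->
      exists (A : C) (beta : pred P (prod I A)),
        ex_free beta /\ univ_free' beta /\ alpha = alls (p1 I A) beta
}.

End Godel.


Set Implicit Arguments.
Unset Strict Implicit.

(* [b | T |- ~ forall a. alpha(a, b)] says [forall a. alpha(a, b) |- bot].
   Since alpha is existential-free it is a predicate of the sub-doctrine P',
   in which bot is universal-free; this produces a term [g : B -> A] with
   [alpha(g b, b) |- bot], i.e. [T |- ~ alpha(g b, b)], and [g b] witnesses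
   [exists a. ~ alpha(a, b)].  Universal-freeness is phrased with the
   quantified variable in the second factor, whence the swap [A x B ~ B x A]. *)

Section Heyting.
Context {H : HeytingAlg}.

Lemma hmeet_le_l (x y : H) : hle (hmeet x y) x.
Proof. exact (proj1 (proj1 (hmeet_ax x y _) (hle_refl _))). Qed.

Lemma hmeet_le_r (x y : H) : hle (hmeet x y) y.
Proof. exact (proj2 (proj1 (hmeet_ax x y _) (hle_refl _))). Qed.

Lemma htop_le_hneg (x : H) : hle htop (hneg x) <-> hle x hbot.
Proof.
  unfold hneg; split; intro Hx.
  - apply himp_ax in Hx. apply hle_trans with (hmeet htop x); [|exact Hx].
    apply hmeet_ax; split; [apply htop_ax | apply hle_refl].
  - apply himp_ax, hle_trans with x; [apply hmeet_le_r | exact Hx].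
Qed.

End Heyting.

Section Products.
Context {C : CCCat}.

Lemma comp_pair (X Y A B : C) (f : hom Y A) (g : hom Y B) (h : hom X Y) :
  comp (pair f g) h = pair (comp f h) (comp g h).
Proof.
  rewrite (pair_uniq (comp (pair f g) h)), !comp_assoc, p1_pair, p2_pair.
  reflexivity.
Qed.

Lemma pair_p1_p2 (A B : C) : pair (p1 A B) (p2 A B) = idm (prod A B).
Proof. rewrite (pair_uniq (idm (prod A B))), !comp_idr. reflexivity. Qed.

Definition swap (A B : C) : hom (prod A B) (prod B A) := pair (p2 A B) (p1 A B).

Lemma swapK (A B : C) : comp (swap B A) (swap A B) = idm (prod A B).
Proof. unfold swap. rewrite comp_pair, p2_pair, p1_pair. apply pair_p1_p2. Qed.

Lemma p1_swap (A B : C) : comp (p1 B A) (swap A B) = p2 A B.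
Proof. apply p1_pair. Qed.

Lemma swap_pair (X A B : C) (f : hom X A) (g : hom X B) :
  comp (swap A B) (pair f g) = pair g f.
Proof. unfold swap. rewrite comp_pair, p2_pair, p1_pair. reflexivity. Qed.

End Products.

Section Doctrine.
Context {C : CCCat} (P : Hyperdoctrine C).

Lemma reidx_mono (A B : C) (f : hom A B) (x y : pred P B) :
  hle x y -> hle (reidx f x) (reidx f y).
Proof.
  intro Hxy.
  assert (Hx : x = hmeet x y).
  { apply hle_antisym; [|apply hmeet_le_l].
    apply hmeet_ax; split; [apply hle_refl | exact Hxy]. }
  rewrite Hx, reidx_meet. apply hmeet_le_r.
Qed.

Lemma reidx_hneg (A B : C) (f : hom A B) (x : pred P B) :
  reidx f (hneg x) = hneg (reidx f x).
Proof. unfold hneg. rewrite reidx_imp, reidx_bot. reflexivity. Qed.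

Lemma exs_unit (A B : C) (f : hom A B) (x : pred P A) :
  hle x (reidx f (exs f x)).
Proof. apply exs_adj, hle_refl. Qed.

Lemma alls_counit (A B : C) (f : hom A B) (x : pred P A) :
  hle (reidx f (alls f x)) x.
Proof. apply alls_adj, hle_refl. Qed.

Lemma reidx_section_le_exs (A B : C) (f : hom A B) (s : hom B A) (x : pred P A) :
  comp f s = idm B -> hle (reidx s x) (exs f x).
Proof.
  intro Hs. rewrite <- (reidx_id (exs f x)), <- Hs, reidx_comp.
  apply reidx_mono, exs_unit.
Qed.

Lemma ex_free_reidx (I J : C) (h : hom J I) (alpha : pred P I) :
  ex_free alpha -> ex_free (reidx h alpha).
Proof.
  intros Halpha A f B beta. rewrite <- reidx_comp. apply Halpha.
Qed.

Lemma alls_p1_swap_le (A B : C) (alpha : pred P (prod A B)) :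
  hle (alls (p1 B A) (reidx (swap B A) alpha)) (alls (p2 A B) alpha).
Proof.
  apply alls_adj.
  rewrite <- p1_swap, reidx_comp.
  apply hle_trans with (reidx (swap A B) (reidx (swap B A) alpha)).
  - apply reidx_mono, alls_counit.
  - rewrite <- reidx_comp, swapK, reidx_id. apply hle_refl.
Qed.

Lemma refuting_witness (A B : C) (alpha : pred P (prod A B)) :
  univ_free' (hbot : pred P B) -> ex_free alpha ->
  hle (alls (p2 A B) alpha) hbot ->
  exists g : hom B A, hle (reidx (pair g (idm B)) alpha) hbot.
Proof.
  intros Hbot Halpha Hall.
  destruct (Hbot B (idm B) A (reidx (swap B A) alpha)) as [g Hg].
  - apply ex_free_reidx, Halpha.
  - rewrite reidx_id. exact (hle_trans (alls_p1_swap_le alpha) Hall).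
  - exists g. rewrite reidx_id, <- reidx_comp, swap_pair in Hg. exact Hg.
Qed.

End Doctrine.

Theorem corollary1 (C : CCCat) (P : Hyperdoctrine C)
  (HG : GodelHyperdoctrine P)
  (Hbot : forall I : C, quantifier_free (hbot : pred P I)) :
  forall (A B : C) (alphaD : pred P (prod A B)),
    quantifier_free alphaD ->
    hle (htop : pred P B) (hneg (alls (p2 A B) alphaD)) ->
    hle (htop : pred P B) (exs (p2 A B) (hneg alphaD)).
Proof.
  intros A B alphaD [Hex _] Hnot.
  apply htop_le_hneg in Hnot.
  destruct (refuting_witness (proj2 (Hbot B)) Hex Hnot) as [g Hg].
  apply hle_trans with (reidx (pair g (idm B)) (hneg alphaD)).
  - rewrite reidx_hneg. apply htop_le_hneg, Hg.
  - apply reidx_section_le_exs, p2_pair.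
Qed.
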